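(* Let $G$ be a graph and $k$ a positive integer with $\operatorname{smw}(G)<k$, and let $P$ be a non-trivial prime graph in a split decomposition of $G$. Then the heavy edges of $P$ (with respect to $k$) form a matching.
   Context: A split of a connected graph $G$ is a partition $(V_1,V_2)$ of $V(G)$ with $|V_1|,|V_2|\ge2$ such that every vertex of $V_1$ with a neighbour in $V_2$ has the same neighbourhood in $V_2$. $\operatorname{mm}(A)$ is the maximum size of a matching among edges between $A$ and $V(G)\setminus A$; $\operatorname{sm}(A)=1$ if $(A,V(G)\setminus A)$ is a split, else $\operatorname{mm}(A)$. A branch decomposition: tree $T$ of max degree 3 with bijection from leaves to $V(G)$; each edge induces a cut; sm-width of $G$, $\operatorname{smw}(G)$, is the minimum over branch decompositions of the maximum $\operatorname{sm}$ of induced cuts. Split decomposition: decomposing along a split $(V_1,V_2)$ gives $G[V_1]$ plus a new marker adjacent to $N_G(V_2)$ and $G[V_2]$ plus the same marker adjacent to $N_G(V_1)$; prime = no split; non-trivial = more than 3 vertices; recursively decomposing until all parts are prime gives a split decomposition, with tree on prime graphs adjacent iff sharing a marker. For $v\in V(G_i)$: $\operatorname{tot}(v:G_i)=\{v\}$ if $v\in V(G)$, else (marker shared with $G_j$) the vertices of $V(G)$ in prime graphs of the component of the tree minus $G_i$ containing $G_j$. $\operatorname{act}(v:G_i)=N_G(V(G)\setminus\operatorname{tot}(v:G_i))$ where $N_G(S)=(\bigcup_{u\in S}N(u))\setminus S$. Adjacent $a,b\in V(G_i)$ form a heavy pair, and $ab$ is a heavy edge, if $|\operatorname{act}(a:G_i)|\ge3k$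 and $|\operatorname{act}(b:G_i)|\ge3k$. *)

From mathcomp Require Import all_boot.
Set Implicit Arguments. Unset Strict Implicit. Unset Printing Implicit Defensive.

(* Generic graph notions: a graph is a vertex set S : {set T} together *)
(* with an adjacency relation r : rel T (only used between members).   *)

Definition nbr_out (T : finType) (S : {set T}) (r : rel T) (X : {set T}) : {set T} :=
  [set y in S | (y \notin X) && [exists x in X, r x y]].

Definition is_split (T : finType) (S : {set T}) (r : rel T) (V1 : {set T}) : bool :=
  [&& V1 \subset S, 1 < #|V1|, 1 < #|S :\: V1| &
   [forall x in V1, forall x' in V1,
      ([exists y in S :\: V1, r x y] && [exists y in S :\: V1, r x' y]) ==>
      [forall y in S :\: V1, r x y == r x' y]]].

Section SmWidth.
Variables (V : finType) (e : rel V).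

Definition cross_matching (A : {set V}) (Mt : {set V * V}) : bool :=
  [forall p in Mt, [&& p.1 \in A, p.2 \notin A & e p.1 p.2]] &&
  [forall p in Mt, forall q in Mt, ((p.1 == q.1) || (p.2 == q.2)) ==> (p == q)].

Definition mm (A : {set V}) : nat :=
  \max_(Mt : {set V * V} | cross_matching A Mt) #|Mt|.

Definition sm (A : {set V}) : nat :=
  if is_split [set: V] e A then 1 else mm A.

Definition rel_minus (N : finType) (t : rel N) (a b : N) : rel N :=
  [rel x y | t x y && ~~ (((x == a) && (y == b)) || ((x == b) && (y == a)))].

(* (N, t) is a tree of maximum degree 3, lf a bijection from V to its leaves. *)
Definition is_branch_decomp (N : finType) (t : rel N) (lf : V -> N) : Prop :=
  [/\ symmetric t, irreflexive t, (forall x y, connect t x y) &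
      [/\
      (forall x y, t x y -> ~~ connect (rel_minus t x y) x y),
      (forall x, #|[set y | t x y]| <= 3),
      injective lf &
      (forall x, (#|[set y | t x y]| <= 1) = (x \in codom lf))]].

Definition bd_cut (N : finType) (t : rel N) (lf : V -> N) (a b : N) : {set V} :=
  [set v | connect (rel_minus t a b) a (lf v)].

(* smw(G) < k : some branch decomposition has all induced cuts of sm-value < k
   (i.e. the minimum over decompositions of the maximum is < k). *)
Definition smw_lt (k : nat) : Prop :=
  exists (N : finType) (t : rel N) (lf : V -> N),
    is_branch_decomp t lf /\
    (forall a b, t a b -> sm (bd_cut t lf a b) < k).

End SmWidth.

(* Split decompositions.  Vertices of the parts live in V + M:         *)
(* inl v is an original vertex, inr m is a marker vertex.              *)

Record part (U : finType) := Part { pv : {set U}; pe : rel U }.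

Definition side (U : finType) (p : part U) (W Wo : {set U}) (z : U) : part U :=
  Part (W :|: [set z])
    (fun x y => [&& x \in W, y \in W & pe p x y]
             || ((x == z) && (y \in nbr_out (pv p) (pe p) Wo))
             || ((y == z) && (x \in nbr_out (pv p) (pe p) Wo))).

Section SplitDecomp.
Variables (V M : finType) (e : rel V).

Definition init_part : part (V + M)%type :=
  Part [set inl v | v : V]
       (fun x y => match x, y with inl a, inl b => e a b | _, _ => false end).

Inductive sd_reach : seq (part (V + M)%type) -> Prop :=
| sd_init : sd_reach [:: init_part]
| sd_step (ps : seq (part (V + M)%type)) (i : nat) (V1 : {set (V + M)%type}) (m : M) :
    sd_reach ps -> i < size ps ->
    is_split (pv (nth init_part ps i)) (pe (nth init_part ps i)) V1 ->
    all (fun q => inr m \notin pv q) ps ->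
    sd_reach (rcons
      (set_nth init_part ps i
         (side (nth init_part ps i) V1 (pv (nth init_part ps i) :\: V1) (inr m)))
      (side (nth init_part ps i) (pv (nth init_part ps i) :\: V1) V1 (inr m))).

Definition is_split_decomp (ps : seq (part (V + M)%type)) : Prop :=
  sd_reach ps /\
  (forall i, i < size ps -> forall V1,
      ~~ is_split (pv (nth init_part ps i)) (pe (nth init_part ps i)) V1).

Definition pt (ps : seq (part (V + M)%type)) (i : 'I_(size ps)) : part (V + M)%type :=
  nth init_part ps i.

(* Adjacency in the decomposition tree: sharing a marker. *)
Definition tadj (ps : seq (part (V + M)%type)) (i j : 'I_(size ps)) : bool :=
  (i != j) && [exists m : M, (inr m \in pv (pt i)) && (inr m \in pv (pt j))].

Definition tot (ps : seq (part (V + M)%type)) (i : 'I_(size ps)) (v : V + M) : {set V} :=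
  match v with
  | inl x => [set x]
  | inr m =>
      [set x | [exists j, [exists k,
         [&& j != i, inr m \in pv (pt j),
             connect [rel a b | [&& a != i, b != i & tadj a b]] j k &
             inl x \in pv (pt k)]]]]
  end.

Definition nbhdG (S : {set V}) : {set V} :=
  [set y | (y \notin S) && [exists x in S, e x y]].

Definition act (ps : seq (part (V + M)%type)) (i : 'I_(size ps)) (v : V + M) : {set V} :=
  nbhdG (~: tot i v).

Definition heavy (k : nat) (ps : seq (part (V + M)%type)) (i : 'I_(size ps)) (a b : V + M) : bool :=
  [&& a \in pv (pt i), b \in pv (pt i), pe (pt i) a b,
      3 * k <= #|act i a| & 3 * k <= #|act i b|].

End SplitDecomp.

From mathcomp Require Import all_boot zify.
From Stdlib Require Import Relation_Operators.
Set Implicit Arguments. Unset Strict Implicit. Unset Printing Implicit Defensive.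

(* Suppose a vertex [a] of the prime part [P] forms heavy pairs with two distinct
   neighbours [b] and [c]. Every vertex [u] of a part of a split decomposition
   stands for the set act(u) of vertices of [G]: these sets are disjoint and
   nonempty, and [G] is complete between act(u) and act(w) when uw is an edge of
   [P] (an invariant preserved by every decomposition step). So act(a) is
   complete to act(b) and to act(c), and all three have at least 3k vertices.
   Starting from an edge of a branch decomposition that splits act(b) evenly and
   walking down the tree, one finds a cut [X] such that both sides meet the
   act-sets of two vertices of [P], and [X] separates k vertices of an act-set
   from k vertices of an act-set complete to it. The first property prevents [X]
   from being a split of [G], as [P] is prime with at least four vertices; the
   second gives a matching of size k across [X]. Hence sm(X) >= k, contradicting
   smw(G) < k. *)

Lemma connect_ind (T : finType) (r : rel T) (P : T -> Prop) x :
  P x -> (forall a b, P a -> r a b -> P b) -> forall y, connect r x y -> P y.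
Proof.
move=> Px IH y /connectP [s]; elim: s x Px => [|z s IHs] x Px /=; first by move=> _ ->.
by case/andP=> rxz ps; apply: (IHs z (IH _ _ Px rxz) ps).
Qed.

Lemma connect_cross (T : finType) (r : rel T) (P : pred T) x y :
  connect r x y -> P x -> ~~ P y -> exists a b, [/\ P a, ~~ P b & r a b].
Proof.
move=> /connectP [s]; elim: s x => [|z s IHs] x /=; first by move=> _ -> ->.
case/andP=> rxz pz yE Px nPy; case: (boolP (P z)) => Pz; last by exists x, z.
exact: IHs pz yE Pz nPy.
Qed.

Lemma leq_of_3mul k n : 3 * k <= n -> k <= n.
Proof. lia. Qed.

Lemma card_setI_ge (T : finType) (A X : {set T}) k :
  3 * k <= #|A| -> #|A :&: ~: X| < k -> k <= #|A :&: X|.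
Proof. by move: (cardsID (~: X) A); rewrite setDE setCK; lia. Qed.

Lemma card_cover2_big (T : finType) (A B C : {set T}) k :
  3 * k <= #|A| -> A \subset B :|: C -> k <= #|A :&: B| \/ k <= #|A :&: C|.
Proof.
move=> hA /setIidPl AE; have [+ _] := leq_card_setU (A :&: B) (A :&: C).
by rewrite -setIUr AE; lia.
Qed.

(** * Cuts of a branch decomposition *)

Section BranchTree.
Variables (V N : finType) (t : rel N) (lf : V -> N).
Hypotheses (t_sym : symmetric t) (t_irr : irreflexive t)
  (t_conn : forall x y, connect t x y)
  (t_bridge : forall x y, t x y -> ~~ connect (rel_minus t x y) x y)
  (t_deg : forall x, #|[set y | t x y]| <= 3) (lf_inj : injective lf)
  (t_leaf : forall x, (#|[set y | t x y]| <= 1) = (x \in codom lf)).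

Local Notation cut := (bd_cut t lf).
Local Notation side p q := (connect (rel_minus t p q) p).

Lemma rel_minus_sym p q : symmetric (rel_minus t p q).
Proof.
move=> x y; rewrite /rel_minus /= t_sym; congr (_ && ~~ _).
by rewrite orbC; congr (_ || _); rewrite andbC.
Qed.

Lemma rel_minusC p q : rel_minus t p q =2 rel_minus t q p.
Proof. by move=> x y; rewrite /rel_minus /= orbC. Qed.

Lemma mem_cut p q v : (v \in cut p q) = side p q (lf v).
Proof. by rewrite inE. Qed.

Lemma side_cover p q n : t p q -> side p q n || side q p n.
Proof.
move=> tpq; rewrite (eq_connect (rel_minusC q p)).
apply: (connect_ind (P := fun n => side p q n || connect (rel_minus t p q) q n)) (t_conn p n).
  by rewrite connect0.
move=> a b /orP Ha tab.
case E: (((a == p) && (b == q)) || ((a == q) && (b == p))).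
  by case/orP: E => /andP [_ /eqP ->]; rewrite connect0 ?orbT.
have rab : rel_minus t p q a b by rewrite /rel_minus /= tab E.
by case: Ha => Ha; apply/orP; [left|right]; apply: connect_trans Ha (connect1 rab).
Qed.

Lemma side_disjoint p q n : t p q -> side p q n -> side q p n -> False.
Proof.
move=> tpq H1; rewrite (eq_connect (rel_minusC q p)) => H2.
move: (t_bridge tpq); rewrite (connect_trans H1) //.
by rewrite (sym_connect_sym (@rel_minus_sym p q)).
Qed.

Lemma cutC p q : t p q -> cut q p = ~: cut p q.
Proof.
move=> tpq; apply/setP => v; rewrite in_setC !mem_cut.
have := side_cover (lf v) tpq; have := @side_disjoint p q (lf v) tpq.
by case: (side p q _); case: (side q p _) => //= H _; case: H.
Qed.

Lemma leaf_side p q n : t p q -> p \in codom lf -> side p q n -> n = p.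
Proof.
move=> tpq; rewrite -t_leaf => hdeg.
move: n; apply: (connect_ind (P := fun n => n = p)) => // a b -> /andP [tpb].
rewrite eqxx /=; suff /eqP -> : b == q by rewrite eqxx.
apply/negPn/negP => bq.
have: #|[set q; b]| <= #|[set y | t p y]|.
  by apply: subset_leq_card; apply/subsetP => y; rewrite !inE => /orP [] /eqP ->.
by rewrite cards2 eq_sym bq => /leq_trans /(_ hdeg).
Qed.

Lemma leaf_cut_eq p q v w : t p q -> p \in codom lf -> v \in cut p q -> w \in cut p q -> v = w.
Proof.
move=> tpq pl; rewrite !mem_cut => Hv Hw; apply: lf_inj.
by rewrite (leaf_side tpq pl Hv) (leaf_side tpq pl Hw).
Qed.

Lemma side_child_sub p q y n : t p q -> t p y -> y != q ->
  side y p n -> side p q n /\ n != p.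
Proof.
move=> tpq tpy yq.
have pq : p != q by apply: contraTneq tpq => ->; rewrite t_irr.
have Hn n' : side y p n' -> n' != p.
  have typ : t y p by rewrite t_sym.
  by move=> H; apply/eqP => E; move: (t_bridge typ); rewrite -{2}E H.
move=> H; split; last exact: Hn H.
suff : side y p n /\ side p q n by case.
move: n H; apply: (connect_ind (P := fun n => side y p n /\ side p q n)).
  split=> //; apply: connect1; rewrite /rel_minus /= tpy.
  by rewrite eqxx /= (negbTE yq) /= (negbTE pq).
move=> a b [Ha Ha'] rab; have Hb := connect_trans Ha (connect1 rab).
split=> //; apply: (connect_trans Ha'); apply: connect1.
move: rab; rewrite /rel_minus /= => /andP [-> _] /=.
by rewrite (negbTE (Hn _ Ha)) (negbTE (Hn _ Hb)) /= !andbF.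
Qed.

Lemma cut_child_sub p q y : t p q -> t p y -> y != q -> cut y p \subset cut p q.
Proof.
move=> tpq tpy yq; apply/subsetP => v; rewrite !mem_cut => H.
by case: (side_child_sub tpq tpy yq H).
Qed.

Lemma side_child p q n : t p q -> side p q n -> n != p ->
  exists2 y, t p y && (y != q) & side y p n.
Proof.
move=> tpq; move: n.
apply: (connect_ind (P := fun n => n != p -> exists2 y, t p y && (y != q) & side y p n)).
  by rewrite eqxx.
move=> a b IH rab bp; case: (eqVneq a p) => [Ea|ap].
  subst a; exists b; last exact: connect0.
  move: rab; rewrite /rel_minus /= eqxx /= => /andP [-> ]; rewrite negb_or.
  by case/andP=> -> _.
have [y Hy Hc] := IH ap; exists y => //; apply: (connect_trans Hc); apply: connect1.
move: rab; rewrite /rel_minus /= => /andP [-> _] /=.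
by rewrite (negbTE ap) (negbTE bp) /= !andbF.
Qed.

Lemma cut_children_disjoint p y1 y2 : t p y1 -> t p y2 -> y1 != y2 ->
  cut y1 p \subset ~: cut y2 p.
Proof.
move=> t1 t2 y12; have ty2p : t y2 p by rewrite t_sym.
by apply: subset_trans (cut_child_sub t2 t1 y12) _; rewrite -cutC.
Qed.

(* Removing the edge towards [q] leaves at most two further neighbours of [p]. *)
Lemma internal_cut_split p q : t p q -> p \notin codom lf ->
  exists y1 y2, [/\ t p y1 && (y1 != q), t p y2 && (y2 != q) &
    cut p q \subset cut y1 p :|: cut y2 p].
Proof.
move=> tpq pl.
have : 1 < #|[set y | t p y]| by rewrite ltnNge t_leaf.
rewrite (cardsD1 q) inE tpq add1n ltnS card_gt0 => /set0Pn [y1].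
rewrite !inE => /andP [y1q ty1].
pose other y := t p y && (y != q) && (y != y1).
have [y2 /andP [/andP [ty2 y2q] y21] | none] := pickP other.
- exists y1, y2; rewrite ty1 y1q ty2 y2q; split => //.
  apply/subsetP => v; rewrite !mem_cut => vS.
  have lvp : lf v != p by apply: contra pl => /eqP <-; apply: codom_f.
  have [y /andP [ty yq] yv] := side_child tpq vS lvp.
  rewrite !inE; case: (eqVneq y y1) => [<-|yy1]; first by rewrite yv.
  case: (eqVneq y y2) => [<-|yy2]; first by rewrite yv orbT.
  have U : uniq [:: q; y1; y2; y].
    rewrite /= !inE !negb_or (eq_sym q y1) y1q (eq_sym q y2) y2q (eq_sym q y) yq.
    by rewrite eq_sym y21 !(eq_sym _ y) yy1 yy2.
  have : #|[:: q; y1; y2; y]| <= #|[set z | t p z]|.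
    by apply: subset_leq_card; apply/subsetP => z; rewrite !inE => /or4P [] /eqP ->.
  by rewrite (card_uniqP U) => /leq_trans /(_ (t_deg p)).
- exists y1, y1; rewrite ty1 y1q setUid; split => //.
  apply/subsetP => v; rewrite !mem_cut => vS.
  have lvp : lf v != p by apply: contra pl => /eqP <-; apply: codom_f.
  have [y /andP [ty yq] yv] := side_child tpq vS lvp.
  by move: (none y); rewrite /other ty yq /= => /negbFE /eqP <-.
Qed.

Definition side_size p q := #|[set n | side p q n]|.

Lemma side_size_child p q y : t p q -> t p y -> y != q -> side_size y p < side_size p q.
Proof.
move=> tpq tpy yq; apply: proper_card; apply/properP; split.
  by apply/subsetP => n; rewrite !inE => H; case: (side_child_sub tpq tpy yq H).
exists p; rewrite !inE ?connect0 //.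
have typ : t y p by rewrite t_sym.
by apply/negP => H; move: (t_bridge typ); rewrite H.
Qed.

Lemma card_setI_cutC (A : {set V}) p q : t p q -> #|A :&: cut q p| = #|A| - #|A :&: cut p q|.
Proof. by move=> tpq; rewrite cutC // -setDE -(cardsID (cut p q) A) addKn. Qed.

Lemma tree_has_edge (v w : V) : v != w -> exists p q, t p q.
Proof.
move=> vw; have : lf v != lf w by apply: contra vw => /eqP /lf_inj ->.
move: (t_conn (lf v) (lf w)) => /connectP [[|z s] /=]; first by move=> _ ->; rewrite eqxx.
by case/andP=> tz _ _ _; exists (lf v), z.
Qed.

Lemma balanced_edge (A : {set V}) k : 0 < k -> 3 * k <= #|A| ->
  exists p q, [/\ t p q, k <= #|A :&: cut p q| & k <= #|A :&: cut q p|].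
Proof.
move=> k0 hA.
have [p [q tpq]] : exists p q, t p q.
  have : 1 < #|A| by apply: leq_trans hA; lia.
  by case/card_gt1P => v [w [_ _ vw]]; apply: tree_has_edge vw.
suff descend n p' q' : t p' q' -> side_size p' q' <= n -> k <= #|A :&: cut p' q'| ->
  exists p q, [/\ t p q, k <= #|A :&: cut p q| & k <= #|A :&: cut q p|].
  have [h|h] := leqP k #|A :&: cut p q|; first exact: descend _ p q tpq (leqnn _) h.
  have tqp : t q p by rewrite t_sym.
  apply: (descend _ q p tqp (leqnn _)); rewrite card_setI_cutC //; lia.
elim: n p' q' => [|n IH] {tpq}p {}q tpq hC hk.
  by move: hC; rewrite leqn0 cards_eq0 => /eqP E; move: (in_set0 p); rewrite -E inE connect0.
suff [small|//] : #|A :&: cut p q| < k.*2 \/ exists p q,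
    [/\ t p q, k <= #|A :&: cut p q| & k <= #|A :&: cut q p|].
  by exists p, q; split => //; rewrite card_setI_cutC //; lia.
have [pl|pl] := boolP (p \in codom lf).
  left; apply: leq_trans (_ : 2 <= _); last lia.
  rewrite ltnS; apply/card_le1_eqP => v w; rewrite !in_setI => /andP [_ vS] /andP [_ wS].
  by rewrite (leaf_cut_eq tpq pl vS wS).
have [y1 [y2 [/andP [t1 n1] /andP [t2 n2] sub]]] := internal_cut_split tpq pl.
have [h1|h1] := leqP k #|A :&: cut y1 p|.
  right; apply: (IH y1 p) => //; first by rewrite t_sym.
  by rewrite -ltnS; apply: leq_trans hC; apply: side_size_child.
have [h2|h2] := leqP k #|A :&: cut y2 p|.
  right; apply: (IH y2 p) => //; first by rewrite t_sym.
  by rewrite -ltnS; apply: leq_trans hC; apply: side_size_child.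
left; have : A :&: cut p q \subset (A :&: cut y1 p) :|: (A :&: cut y2 p).
  by rewrite -setIUr setIS.
move/subset_leq_card/leq_trans/(_ (leq_card_setU _ _)); lia.
Qed.

(** * Wide cuts *)

Section WideCut.
Variables (U : finType) (e : rel V) (Pv : {set U}) (W : U -> {set V}) (k : nat).
Hypotheses (e_sym : symmetric e) (k_gt0 : 0 < k)
  (W_disj : forall u w, u \in Pv -> w \in Pv -> u != w -> [disjoint W u & W w])
  (W_neq0 : forall u, u \in Pv -> W u != set0).

Definition meets (X : {set V}) u := W u :&: X != set0.

Definition meets2 (X : {set V}) :=
  [exists u in Pv, exists w in Pv, [&& u != w, meets X u & meets X w]].

Definition complete (A B : {set V}) := forall x y, x \in A -> y \in B -> e x y.

Definition cross_biclique (X : {set V}) := exists S1 S2 : {set V},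
  [/\ S1 \subset X, S2 \subset ~: X, k <= #|S1|, k <= #|S2| & complete S1 S2].

Definition wide_cut (X : {set V}) := [/\ meets2 X, meets2 (~: X) & cross_biclique X].

Lemma meetsP (X : {set V}) u : reflect (exists2 x, x \in W u & x \in X) (meets X u).
Proof.
apply: (iffP (set0Pn _)) => [[x]|[x h1 h2]]; first by rewrite inE => /andP []; exists x.
by exists x; rewrite inE h1 h2.
Qed.

Lemma meets2P (X : {set V}) : reflect
  (exists u w, [/\ u \in Pv, w \in Pv, u != w, meets X u & meets X w]) (meets2 X).
Proof.
apply: (iffP existsP) => [[u /andP [uP /existsP [w /andP [wP /and3P [? ? ?]]]]]|].
  by exists u, w.
by case=> u [w [uP wP ? ? ?]]; exists u; rewrite uP; apply/existsP; exists w; apply/and4P.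
Qed.

Lemma meets_card (X : {set V}) u : 0 < #|W u :&: X| -> meets X u.
Proof. by rewrite card_gt0. Qed.

Lemma meets_or (X : {set V}) u : u \in Pv -> meets X u || meets (~: X) u.
Proof.
move=> uP; have /set0Pn [x xW] := W_neq0 uP.
by case: (boolP (x \in X)) => xX; apply/orP; [left|right]; apply/meetsP; exists x; rewrite ?inE.
Qed.

Lemma meets_subset (X Y : {set V}) u : X \subset Y -> meets X u -> meets Y u.
Proof. by move=> /subsetP XY /meetsP [x h1 /XY h2]; apply/meetsP; exists x. Qed.

Lemma meets_of_subset (X : {set V}) u : u \in Pv -> W u \subset X -> meets X u.
Proof.
by move=> uP /subsetP WX; have /set0Pn [x xW] := W_neq0 uP; apply/meetsP; exists x => //; apply: WX.
Qed.

Lemma subset_of_not_meets (X : {set V}) u : ~~ meets X u -> W u \subset ~: X.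
Proof.
by move=> h; apply/subsetP => x xW; rewrite inE; apply: contra h => xX; apply/meetsP; exists x.
Qed.

Lemma not_meets2_eq (X : {set V}) u w : ~~ meets2 X -> u \in Pv -> w \in Pv ->
  meets X u -> meets X w -> w = u.
Proof.
move=> /meets2P H uP wP tu tw; apply/eqP; apply/negPn/negP => wu; apply: H.
by exists w, u.
Qed.

Lemma completeC A B : complete A B -> complete B A.
Proof. by move=> h x y xB yA; rewrite e_sym; apply: h. Qed.

Lemma cross_biclique_of_complete (A B X : {set V}) : complete A B ->
  k <= #|A :&: X| -> k <= #|B :&: ~: X| -> cross_biclique X.
Proof.
move=> cAB hA hB; exists (A :&: X), (B :&: ~: X); split; rewrite ?subsetIr //.
by move=> x y /setIP [xA _] /setIP [yB _]; apply: cAB.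
Qed.

Variables (a b c d : U).
Hypotheses (aP : a \in Pv) (bP : b \in Pv) (cP : c \in Pv) (dP : d \in Pv)
  (ab : a != b) (ac : a != c) (ad : a != d) (bc : b != c) (bd : b != d) (cd : c != d)
  (Wab : complete (W a) (W b)) (Wac : complete (W a) (W c))
  (Wa_big : 3 * k <= #|W a|) (Wb_big : 3 * k <= #|W b|) (Wc_big : 3 * k <= #|W c|).

Definition b_pocket p q := [/\ t p q, k <= #|W b :&: cut p q| &
  forall u, u \in Pv -> meets (cut p q) u -> u = b].

Lemma wide_cut_or_b_pocket_side p q : t p q -> k <= #|W b :&: cut p q| ->
  ~~ meets (cut p q) a -> ~~ meets (cut p q) c -> wide_cut (cut p q) \/ b_pocket p q.
Proof.
move=> tpq hb na nc.
have Wa_out := subset_of_not_meets na.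
have [/existsP [u /and3P [uP ub tu]]|alone] :=
  boolP [exists u in Pv, (u != b) && meets (cut p q) u].
  left; split.
  - by apply/meets2P; exists u, b; split => //; apply: meets_card; apply: leq_trans k_gt0 hb.
  - apply/meets2P; exists a, c; split => //; first exact: meets_of_subset.
    by move: (meets_or (cut p q) cP); rewrite (negbTE nc).
  - apply: cross_biclique_of_complete (completeC Wab) hb _.
    by rewrite (setIidPl Wa_out); apply: leq_of_3mul.
right; split => // u uP tu; apply/eqP; apply: contraNT alone => ub.
by apply/existsP; exists u; rewrite uP ub tu.
Qed.

Lemma wide_cut_or_b_pocket :
  (exists p q, t p q /\ wide_cut (cut p q)) \/ exists p q, b_pocket p q.
Proof.
have [p [q [tpq h1 h2]]] := balanced_edge k_gt0 Wb_big.
have tqp : t q p by rewrite t_sym.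
have [|/norP [na nc]] := boolP (meets (cut p q) a || meets (cut p q) c); last first.
  by case: (wide_cut_or_b_pocket_side tpq h1 na nc) => ?; [left|right]; exists p, q.
have [|/norP [na nc]] := boolP (meets (cut q p) a || meets (cut q p) c); last first.
  by case: (wide_cut_or_b_pocket_side tqp h2 na nc) => ?; [left|right]; exists q, p.
rewrite (cutC tpq) => tB tA; left; exists p, q; split => //.
have hb2 : k <= #|W b :&: ~: cut p q| by rewrite -(cutC tpq).
have meets2_ac_b X : meets X a || meets X c -> 0 < #|W b :&: X| -> meets2 X.
  move=> tac /meets_card tb; apply/meets2P.
  by case/orP: tac => ?; [exists a, b|exists c, b]; split; rewrite // eq_sym.
split; [exact: meets2_ac_b tA (leq_trans k_gt0 h1) | exact: meets2_ac_b tB (leq_trans k_gt0 hb2) |].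
have [ha|ha] := leqP k #|W a :&: ~: cut p q|.
  exact: cross_biclique_of_complete (completeC Wab) h1 ha.
exact: cross_biclique_of_complete Wab (card_setI_ge Wa_big ha) hb2.
Qed.

Definition ab_cut (X : {set V}) :=
  [&& k <= #|W a :&: X|, meets2 X & k <= #|W b :&: ~: X|].

Lemma not_meets2_leaf p q : t p q -> p \in codom lf -> ~~ meets2 (cut p q).
Proof.
move=> tpq pl; apply/meets2P => [[u [w [uP wP uw /meetsP [x xu xX] /meetsP [y yw yX]]]]].
move: yw; rewrite -(leaf_cut_eq tpq pl xX yX) => xw.
by move: (W_disj uP wP uw) => /disjointFr /(_ xu); rewrite xw.
Qed.

(* If a child cut holds k vertices of [W a] but meets no other part, then [W c]
   and [W d] lie in the sibling cut, which is then wide. *)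
Lemma wide_cut_sibling p q yA yB : t p q -> t p yA -> yA != q -> t p yB -> yB != q ->
  cut p q \subset cut yA p :|: cut yB p ->
  k <= #|W a :&: cut yA p| -> ~~ meets2 (cut yA p) ->
  W c \subset cut p q -> W d \subset cut p q -> meets (~: cut p q) b ->
  wide_cut (cut yB p).
Proof.
move=> tpq tA nA tB nB cover hA nt Wc_in Wd_in tb.
have tAa : meets (cut yA p) a by apply: meets_card; apply: leq_trans k_gt0 hA.
have in_yB u : u \in Pv -> a != u -> W u \subset cut p q -> W u \subset cut yB p.
  move=> uP au /subsetP Win; apply/subsetP => v vW.
  move/subsetP: cover => /(_ v (Win v vW)); rewrite inE => /orP [vA|//].
  have tu : meets (cut yA p) u by apply/meetsP; exists v.
  by move: au; rewrite (not_meets2_eq nt aP uP tAa tu) eqxx.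
have cB := in_yB c cP ac Wc_in; have dB := in_yB d dP ad Wd_in.
have yAB : yA != yB.
  apply: contraNneq ac => yAB.
  have tc : meets (cut yA p) c by rewrite yAB; apply: meets_of_subset.
  by rewrite (not_meets2_eq nt aP cP tAa tc).
have disj : cut yA p \subset ~: cut yB p by apply: cut_children_disjoint.
split.
- by apply/meets2P; exists c, d; split => //; apply: meets_of_subset.
- apply/meets2P; exists a, b; split => //; first exact: meets_subset disj tAa.
  by apply: meets_subset tb; rewrite setCS; apply: cut_child_sub.
- apply: cross_biclique_of_complete (completeC Wac) _ _.
    by rewrite (setIidPl cB); apply: leq_of_3mul.
  by apply: leq_trans hA _; apply/subset_leq_card/setIS.
Qed.

Lemma ab_cut_child p q y : t p q -> t p y -> y != q -> ab_cut (cut p q) ->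
  k <= #|W a :&: cut y p| -> meets2 (cut y p) -> ab_cut (cut y p).
Proof.
move=> tpq tpy yq /and3P [_ _ hb] ha m2; rewrite /ab_cut ha m2 /=.
by apply: leq_trans hb _; apply/subset_leq_card/setIS; rewrite setCS; apply: cut_child_sub.
Qed.

Lemma wide_cut_of_ab_cut n p q : t p q -> side_size p q <= n -> ab_cut (cut p q) ->
  exists p' q', t p' q' /\ wide_cut (cut p' q').
Proof.
elim: n p q => [|n IH] p q tpq hC.
  by move: hC; rewrite leqn0 cards_eq0 => /eqP E; move: (in_set0 p); rewrite -E inE connect0.
move=> /and3P [ha m2 hb].
have tb : meets (~: cut p q) b by apply: meets_card; apply: leq_trans k_gt0 hb.
have [m2C|narrow] := boolP (meets2 (~: cut p q)).
  by exists p, q; split => //; split => //; apply: cross_biclique_of_complete Wab ha hb.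
have inside u : u \in Pv -> u != b -> W u \subset cut p q.
  move=> uP ub; rewrite -[cut p q]setCK; apply: subset_of_not_meets.
  by apply: contra ub => tu; rewrite (not_meets2_eq narrow bP uP tb tu).
have [pl|pl] := boolP (p \in codom lf).
  by move: m2; rewrite (negbTE (not_meets2_leaf tpq pl)).
have [y1 [y2 [/andP [t1 n1] /andP [t2 n2] cover]]] := internal_cut_split tpq pl.
have child y y' : t p y -> y != q -> t p y' -> y' != q ->
    cut p q \subset cut y p :|: cut y' p -> k <= #|W a :&: cut y p| ->
    exists p' q', t p' q' /\ wide_cut (cut p' q').
  move=> ty yq ty' y'q cov hy.
  have [m2y|nm2y] := boolP (meets2 (cut y p)).
    apply: (IH y p); first by rewrite t_sym.
      by rewrite -ltnS; apply: leq_trans hC; apply: side_size_child.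
    by apply: ab_cut_child tpq ty yq _ hy m2y; apply/and3P.
  exists y', p; split; first by rewrite t_sym.
  by apply: wide_cut_sibling tpq ty yq ty' y'q cov hy nm2y _ _ tb; apply: inside; rewrite // eq_sym.
have := card_cover2_big Wa_big (subset_trans (inside a aP ab) cover).
case=> [h1|h2]; first exact: child t1 n1 t2 n2 cover h1.
by apply: child t2 n2 t1 n1 _ h2; rewrite setUC.
Qed.

Lemma exists_wide_cut : exists p q, t p q /\ wide_cut (cut p q).
Proof.
case: wide_cut_or_b_pocket => [//|[p [q [tpq hb only_b]]]].
have tqp : t q p by rewrite t_sym.
have outside u : u \in Pv -> u != b -> W u \subset cut q p.
  move=> uP ub; rewrite (cutC tpq); apply: subset_of_not_meets.
  by apply: contra ub => /(only_b u uP) ->.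
apply: (wide_cut_of_ab_cut tqp (leqnn _)); apply/and3P; split.
- by rewrite (setIidPl (outside a aP ab)); apply: leq_of_3mul.
- have cb : c != b by rewrite eq_sym.
  by apply/meets2P; exists a, c; split => //; apply: meets_of_subset => //; apply: outside.
- by rewrite (cutC tpq) setCK.
Qed.

End WideCut.
End BranchTree.

(** * Matchings and splits across a wide cut *)

Lemma cross_biclique_mm (V : finType) (e : rel V) k (X : {set V}) :
  cross_biclique e k X -> k <= mm e X.
Proof.
case: k => [|k] [S1 [S2 [s1 s2 h1 h2 hc]]] //.
have [x0 _] : exists x0, x0 \in S1 by apply/set0Pn; rewrite -card_gt0; apply: leq_trans h1.
have [y0 _] : exists y0, y0 \in S2 by apply/set0Pn; rewrite -card_gt0; apply: leq_trans h2.
pose f (i : 'I_k.+1) := (nth x0 (enum S1) i, nth y0 (enum S2) i).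
have nth_inj (S : {set V}) z0 : k.+1 <= #|S| -> injective (fun i : 'I_k.+1 => nth z0 (enum S) i).
  move=> hS i j /eqP; rewrite nth_uniq ?enum_uniq -?cardE ?(leq_trans (ltn_ord _) hS) //.
  by move/eqP/val_inj.
have nth_mem (S : {set V}) z0 (i : 'I_k.+1) : k.+1 <= #|S| -> nth z0 (enum S) i \in S.
  by move=> hS; rewrite -mem_enum mem_nth // -cardE (leq_trans (ltn_ord _) hS).
have f_inj : injective f by move=> i j [/(nth_inj _ _ h1)].
have cm : cross_matching e X [set f i | i in 'I_k.+1].
  apply/andP; split; apply/forallP => m1; apply/implyP => /imsetP [i _ ->] /=.
    have := subsetP s2 _ (nth_mem _ y0 i h2); rewrite inE => ->.
    by rewrite (subsetP s1 _ (nth_mem _ x0 i h1)) hc ?nth_mem.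
  apply/forallP => m2; apply/implyP => /imsetP [j _ ->] /=.
  by apply/implyP => /orP [] /eqP; [move/(nth_inj _ _ h1) | move/(nth_inj _ _ h2)] => ->.
have := @leq_bigmax_cond _ (cross_matching e X) (fun Mt : {set V * V} => #|Mt|) _ cm.
by rewrite card_imset // card_ord.
Qed.

Section PrimePart.
Variables (V U : finType) (e : rel V) (Pv : {set U}) (pe : rel U) (W : U -> {set V}) (k : nat).
Hypotheses (W_neq0 : forall u, u \in Pv -> W u != set0)
  (W_edge : forall u w, u \in Pv -> w \in Pv -> u != w ->
     forall x y, x \in W u -> y \in W w -> e x y = pe u w)
  (P_prime : forall V1, ~~ is_split Pv pe V1) (P_big : 3 < #|Pv|).

Lemma meets2_bipartition (X : {set V}) : meets2 Pv W X -> meets2 Pv W (~: X) ->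
  exists V1 : {set U}, [/\ V1 \subset Pv, 1 < #|V1|, 1 < #|Pv :\: V1|,
    {in V1, forall u, meets W X u} & {in Pv :\: V1, forall u, meets W (~: X) u}].
Proof.
move=> /meets2P [u1 [u2 [u1P u2P u12 t1 t2]]] /meets2P [w1 [w2 [w1P w2P w12 s1 s2]]].
pose inner := [set u in Pv | ~~ meets W (~: X) u].
have outer u : u \in Pv -> u \notin inner -> meets W (~: X) u by rewrite inE => ->; rewrite negbK.
have inner_meets u : u \in inner -> meets W X u.
  by rewrite inE => /andP [uP]; case/orP: (meets_or W_neq0 X uP) => ->.
have [big|small] := leqP 2 #|inner|.
  exists inner; split => //.
  - by apply/subsetP => u; rewrite inE => /andP [].
  - have : [set w1; w2] \subset Pv :\: inner.
      by apply/subsetP => u; rewrite !inE => /orP [] /eqP ->; rewrite ?s1 ?s2 ?w1P ?w2P.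
    by move/subset_leq_card; rewrite cards2 w12.
  - by move=> u /setDP [uP /outer]; apply.
suff [x1 [x2 [x12 x1P x2P [tx1 tx2] cov]]] : exists x1 x2, [/\ x1 != x2, x1 \in Pv, x2 \in Pv,
    meets W X x1 /\ meets W X x2 & inner \subset [set x1; x2]].
  have sub : [set x1; x2] \subset Pv by apply/subsetP => u; rewrite !inE => /orP [] /eqP ->.
  exists [set x1; x2]; split => //.
  - by rewrite cards2 x12.
  - by rewrite cardsD (setIidPr sub) cards2 x12 ltn_subRL.
  - by move=> u; rewrite !inE => /orP [] /eqP ->.
  - by move=> u /setDP [uP ux]; apply: outer uP _; apply: contra ux; apply: (subsetP cov).
case: (set_0Vmem inner) => [->|[e1 e1I]]; first by exists u1, u2; rewrite sub0set.
have one : inner \subset [set e1].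
  by apply/subsetP => u uI; rewrite inE (card_le1_eqP _ _ _ uI e1I).
have e1P : e1 \in Pv by move: e1I; rewrite inE => /andP [].
have [E|e1u1] := eqVneq e1 u1.
  by exists u1, u2; split => //; apply: subset_trans one _; rewrite sub1set !inE E eqxx.
exists e1, u1; split => //; first by split => //; apply: inner_meets.
by apply: subset_trans one _; rewrite sub1set !inE eqxx.
Qed.

(* A split [X] of [G] would induce the split [V1] of [P], because [W] turns the
   adjacencies of [P] into those of [G] between representatives. *)
Lemma meets2_not_split (X : {set V}) : meets2 Pv W X -> meets2 Pv W (~: X) ->
  ~~ is_split [set: V] e X.
Proof.
move=> h1 h2; have [V1 [sub c1 c2 inX inXC]] := meets2_bipartition h1 h2.
apply/negP => /and4P [_ _ _ /forallP hs].
case/negP: (P_prime V1); apply/and4P; split => //.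
have rep (Y : {set V}) u : meets W Y u -> exists2 x, x \in W u & x \in Y by move/meetsP.
have V1P u : u \in V1 -> u \in Pv by apply: (subsetP sub).
have V2P u : u \in Pv :\: V1 -> u \in Pv by case/setDP.
have V12 u w : u \in V1 -> w \in Pv :\: V1 -> u != w.
  by move=> uV /setDP [_]; apply: contraNneq => <-.
have edge u w x y : u \in V1 -> w \in Pv :\: V1 -> x \in W u -> y \in W w -> e x y = pe u w.
  by move=> uV wV; apply: (W_edge (V1P _ uV) (V2P _ wV) (V12 _ _ uV wV)).
apply/forallP => x; apply/implyP => xV; apply/forallP => x'; apply/implyP => x'V.
apply/implyP => /andP [/existsP [y0 /andP [y0D py0]] /existsP [y0' /andP [y0'D py0']]].
apply/forallP => y; apply/implyP => yD.
have [rx rxW rxX] := rep _ _ (inX x xV).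
have [rx' rx'W rx'X] := rep _ _ (inX x' x'V).
have [ry0 ry0W ry0X] := rep _ _ (inXC y0 y0D).
have [ry0' ry0'W ry0'X] := rep _ _ (inXC y0' y0'D).
have [ry ryW ryX] := rep _ _ (inXC y yD).
rewrite -(edge x y rx ry) // -(edge x' y rx' ry) //.
move: (hs rx) => /implyP /(_ rxX) /forallP /(_ rx') /implyP /(_ rx'X) /implyP H.
have : [forall y1 in [set: V] :\: X, e rx y1 == e rx' y1].
  apply: H; apply/andP; split; apply/existsP.
    by exists ry0; rewrite setTD ry0X (edge x y0 rx ry0).
  by exists ry0'; rewrite setTD ry0'X (edge x' y0' rx' ry0').
by move/forallP /(_ ry) /implyP; apply; rewrite setTD.
Qed.

Lemma wide_cut_sm (X : {set V}) : wide_cut e Pv W k X -> k <= sm e X.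
Proof.
case=> m2 m2C bic; rewrite /sm (negbTE (meets2_not_split m2 m2C)).
exact: cross_biclique_mm.
Qed.

End PrimePart.

(** * The invariant of split decompositions *)

#[local] Arguments rt_step {A R x y}.
#[local] Arguments rt_refl {A R x}.
#[local] Arguments rt_trans {A R x y z}.

Section ReflTransClosure.
Variables (A B : Type) (r : A -> A -> Prop).

Lemma rt_inv (P : A -> Prop) x y : P x -> (forall a b, P a -> r a b -> P b) ->
  clos_refl_trans A r x y -> P y.
Proof.
move=> Px step h; elim: h Px => [a b rab Pa|//|a b c _ IH1 _ IH2 /IH1/IH2] //.
exact: step Pa rab.
Qed.

Lemma rt_map (r' : B -> B -> Prop) (f : A -> B) x y :
  (forall a b, r a b -> clos_refl_trans B r' (f a) (f b)) ->
  clos_refl_trans A r x y -> clos_refl_trans B r' (f x) (f y).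
Proof.
move=> H h; elim: h => [a b /H //|a|a b c _ IH1 _ IH2]; first exact: rt_refl.
exact: rt_trans IH1 IH2.
Qed.

End ReflTransClosure.

Lemma lifted_index_neq (a b a' b' i0 n : nat) : a < n -> b < n -> a <> b -> (a' = a \/ a = i0 /\ a' = n) ->
  (b' = b \/ b = i0 /\ b' = n) -> a' <> b'.
Proof. lia. Qed.

Lemma marker_index_eq (j s s' i0 n : nat) : j = i0 \/ j = n -> s = i0 \/ s = n -> s' = i0 \/ s' = n ->
  s <> s' -> j <> s -> j = s'.
Proof. lia. Qed.

Section Decomp.
Variables (V M : finType) (e : rel V).
Hypotheses (esym : symmetric e) (eirr : irreflexive e).
Notation U := (V + M)%type.
Notation ip := (init_part M e).
Notation nthp ps j := (nth ip ps j).

Definition part_adj (ps : seq (part U)) (q a b : nat) : Prop :=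
  [/\ a < size ps, b < size ps, a <> q, b <> q &
      a <> b /\ exists m, inr m \in pv (nthp ps a) /\ inr m \in pv (nthp ps b)].

Notation linked ps q := (clos_refl_trans nat (part_adj ps q)).

Lemma part_adj_sym ps q a b : part_adj ps q a b -> part_adj ps q b a.
Proof. by case=> h1 h2 h3 h4 [h5 [m [m1 m2]]]; split => //; split; [by move=> E; apply: h5|exists m]. Qed.

(* [tot] and [act] with parts addressed by their index in [ps]; [linked ps q] is
   connectivity in the decomposition tree with part [q] removed. *)
Definition in_tot (ps : seq (part U)) (q : nat) (u : U) (x : V) : Prop :=
  match u with
  | inl y => x = y
  | inr m => exists j k, [/\ j < size ps, j <> q, inr m \in pv (nthp ps j),
               linked ps q j k & inl x \in pv (nthp ps k)]
  end.

Definition in_act (Tu : V -> Prop) (x : V) : Prop := Tu x /\ exists y, ~ Tu y /\ e y x.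

Lemma linked_lt ps q j k : linked ps q j k -> j < size ps -> k < size ps.
Proof. by move=> h jn; apply: (rt_inv (P := fun k => k < size ps)) h => // a b _ []. Qed.

Lemma linked_neq ps q j k : linked ps q j k -> j <> q -> k <> q.
Proof. by move=> h jq; apply: (rt_inv (P := fun k => k <> q)) h => // a b _ []. Qed.

Lemma totP ps (i : 'I_(size ps)) u x : (x \in tot e i u) <-> in_tot ps i u x.
Proof.
case: u => [y|m] /=; first by rewrite inE; split; [move/eqP|move=> ->].
rewrite inE; split.
  case/existsP => j /existsP [k /and4P [ji mj cjk xk]].
  exists j, k; split => //; first by apply/eqP.
  move: cjk; apply: (connect_ind (P := fun k : 'I_(size ps) => linked ps i j k)); first exact: rt_refl.
  move=> a b IH /and3P [ai bi /andP [ab /existsP [m' /andP [m1 m2]]]]; apply: rt_trans IH (rt_step _).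
  split => //; try by apply/eqP.
  by split; [move=> E; move: ab; rewrite -val_eqE /= E eqxx | exists m'].
case=> j [k [jn ji mj rjk xk]].
have kn : k < size ps by apply: linked_lt rjk jn.
apply/existsP; exists (Ordinal jn); apply/existsP; exists (Ordinal kn).
apply/and4P; split => //; first by apply/eqP => /(congr1 val) /=.
have lift a b (an : a < size ps) (bn : b < size ps) : linked ps i a b ->
    connect [rel a b | [&& a != i, b != i & tadj e a b]] (Ordinal an) (Ordinal bn).
  move=> h; elim: h an bn => [a' b' [_ _ ai bi [ab [m' [m1 m2]]]]|a'|a' y b' hay IH1 _ IH2] an bn.
  - apply: connect1 => /=; apply/and3P; split; try by apply/eqP => /(congr1 val) /=.
    apply/andP; split; first by apply/eqP => /(congr1 val) /=.
    by apply/existsP; exists m'; rewrite /pt /= m1 m2.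
  - by rewrite (bool_irrelevance an bn) connect0.
  - have yn := linked_lt hay an; exact: connect_trans (IH1 an yn) (IH2 yn bn).
exact: lift.
Qed.

Lemma actP ps (i : 'I_(size ps)) u x : (x \in act e i u) <-> in_act (in_tot ps i u) x.
Proof.
have tt := @totP ps i u.
rewrite /act /nbhdG inE; split.
  case/andP => h /existsP [y /andP [yo eyx]]; move: h; rewrite inE negbK => h.
  split; first exact: (tt x).1.
  exists y; split => // /(tt y).2 hy; by rewrite inE hy in yo.
case=> h [y [ny eyx]]; apply/andP; split; first by rewrite inE negbK; exact: (tt x).2.
by apply/existsP; exists y; rewrite inE eyx andbT; apply/negP => /(tt y).1.
Qed.

(* The sets [Tf u] of the vertices [u] of [P] partition V(G); an edge of G
   between [Tf u] and [Tf w] forces uw to be an edge of [P], and an edge uw of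
   [P] makes act(u) complete to act(w). *)
Record represents (P : part U) (Tf : U -> V -> Prop) : Prop := {
  rep_sym : forall x y, pe P x y = pe P y x;
  rep_irr : forall u, pe P u u = false;
  rep_disj : forall u w x, u \in pv P -> w \in pv P -> u != w -> Tf u x -> Tf w x -> False;
  rep_neq0 : forall u, u \in pv P -> exists x, Tf u x;
  rep_cover : forall x, exists2 u, u \in pv P & Tf u x;
  rep_edge : forall u w x y, u \in pv P -> w \in pv P -> u != w -> Tf u x -> Tf w y -> e x y -> pe P u w;
  rep_adj : forall u w x y, u \in pv P -> w \in pv P -> u != w -> pe P u w ->
            in_act (Tf u) x -> in_act (Tf w) y -> e x y }.

Definition split_cond (r : rel U) (Ws Ws' : {set U}) := forall x x', x \in Ws -> x' \in Ws ->
  (exists y, y \in Ws' /\ r x y) -> (exists y, y \in Ws' /\ r x' y) -> forall y, y \in Ws' -> r x y = r x' y.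

Lemma split_condP (S : {set U}) r V1 : is_split S r V1 -> split_cond r V1 (S :\: V1).
Proof.
case/and4P => _ _ _ /forallP H x x' xV x'V [y0 [y0D r0]] [y1 [y1D r1]] y yD.
move: (H x) => /implyP /(_ xV) /forallP /(_ x') /implyP /(_ x'V) /implyP H2.
have pre : [exists y in S :\: V1, r x y] && [exists y in S :\: V1, r x' y].
  by apply/andP; split; apply/existsP; [exists y0|exists y1]; rewrite ?y0D ?y1D.
by move: (H2 pre) => /forallP /(_ y) /implyP /(_ yD) /eqP.
Qed.

Lemma split_condC (S : {set U}) r V1 : symmetric r -> is_split S r V1 -> split_cond r (S :\: V1) V1.
Proof.
move=> rs hs; have h1 := split_condP hs.
have key : forall v y0 y, v \in S :\: V1 -> y0 \in V1 -> r v y0 -> y \in V1 ->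
    r v y = [exists w in S :\: V1, r y w].
  move=> v y0 y vD y0V rv yV; apply/idP/idP => [ry|/existsP [w /andP [wD ryw]]].
    by apply/existsP; exists v; rewrite vD /= rs.
  rewrite rs (h1 y y0 yV y0V _ _ v vD); [by rewrite rs | by exists w | by exists v; rewrite rs].
move=> x x' xD x'D [y0 [y0V r0]] [y1 [y1V r1]] y yV.
by rewrite (key x y0 y) // (key x' y1 y).
Qed.

Lemma in_act_ext (Tf Tg : V -> Prop) x : (forall y, Tf y <-> Tg y) -> in_act Tf x <-> in_act Tg x.
Proof.
move=> E; split=> [[/E h [y [ny eyx]]]|[/E h [y [ny eyx]]]]; split=> //;
  by exists y; split=> // /E.
Qed.

Lemma represents_ext P Tf Tg : represents P Tf ->
  (forall u, u \in pv P -> forall x, Tg u x <-> Tf u x) -> represents P Tg.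
Proof.
move=> [h1 h2 h3 h4 h5 h6 h7] E.
have EA u x : u \in pv P -> in_act (Tg u) x <-> in_act (Tf u) x.
  by move=> uP; apply: in_act_ext => y; apply: E.
split => //.
- by move=> u w x uP wP uw /(E u uP) hu /(E w wP) hw; apply: h3 uP wP uw hu hw.
- by move=> u uP; have [x /(E u uP) hx] := h4 u uP; exists x.
- by move=> x; have [u uP /(E u uP) hx] := h5 x; exists u.
- by move=> u w x y uP wP uw /(E u uP) hu /(E w wP) hw; apply: h6 uP wP uw hu hw.
- by move=> u w x y uP wP uw puw /(EA u x uP) hu /(EA w y wP) hw; apply: h7 uP wP uw puw hu hw.
Qed.

Lemma side_pv (p : part U) Ws Ws' z u : (u \in pv (side p Ws Ws' z)) = (u \in Ws) || (u == z).
Proof. by rewrite /side /= !inE orbC. Qed.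

Lemma side_pe (p : part U) Ws Ws' z x y : pe (side p Ws Ws' z) x y =
  [&& x \in Ws, y \in Ws & pe p x y]
  || ((x == z) && (y \in nbr_out (pv p) (pe p) Ws'))
  || ((y == z) && (x \in nbr_out (pv p) (pe p) Ws')).
Proof. by []. Qed.

Lemma nbr_outP (S Ws' : {set U}) (r : rel U) y :
  reflect [/\ y \in S, y \notin Ws' & exists2 x, x \in Ws' & r x y] (y \in nbr_out S r Ws').
Proof.
rewrite /nbr_out inE; apply: (iffP and3P) => [[a b /existsP [x /andP [c d]]]|[a b [x c d]]].
  by split => //; exists x.
by split => //; apply/existsP; exists x; rewrite c.
Qed.

Section SideRepresentation.
Variables (p : part U) (Told Tnew : U -> V -> Prop) (Ws Ws' : {set U}) (z : U).
Hypotheses (rep : represents p Told) (z_fresh : z \notin pv p)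
  (cover : Ws :|: Ws' = pv p) (disj : [disjoint Ws & Ws']) (Ws'_neq0 : Ws' != set0)
  (Ws_split : split_cond (pe p) Ws Ws')
  (Tnew_kept : forall u, u \in Ws -> forall x, Tnew u x <-> Told u x)
  (Tnew_marker : forall x, Tnew z x <-> exists2 w, w \in Ws' & Told w x).
Local Notation q := (side p Ws Ws' z).

Lemma kept_sub u : u \in Ws -> u \in pv p.
Proof. by move=> uW; rewrite -cover inE uW. Qed.

Lemma other_sub u : u \in Ws' -> u \in pv p.
Proof. by move=> uW; rewrite -cover inE uW orbT. Qed.

Lemma kept_other_neq u w : u \in Ws -> w \in Ws' -> u != w.
Proof. by move=> uW wW; apply: contraTneq wW => <-; rewrite (disjointFr disj uW). Qed.

Lemma kept_neq_marker u : u \in Ws -> u != z.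
Proof. by move=> /kept_sub; apply: contraTneq => ->. Qed.

Lemma side_pe_sym x y : pe q x y = pe q y x.
Proof.
rewrite !side_pe (rep_sym rep).
by case: (x \in Ws); case: (y \in Ws); case: (x == z); case: (y == z);
  case: (x \in nbr_out _ _ _); case: (y \in nbr_out _ _ _); rewrite /= ?andbF ?orbF ?orbT.
Qed.

Lemma side_pe_marker u : u \in Ws -> pe q u z = (u \in nbr_out (pv p) (pe p) Ws').
Proof.
move=> uW; have zWs : z \notin Ws by apply: contra z_fresh; apply: kept_sub.
by rewrite side_pe (negbTE zWs) andbF eqxx (negbTE (kept_neq_marker uW)).
Qed.

Lemma side_edge_marker u x y : u \in Ws -> Tnew u x -> Tnew z y -> e x y -> pe q u z.
Proof.
move=> uW /(Tnew_kept uW) hu /Tnew_marker [w wW hw] exy; rewrite side_pe_marker //.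
apply/nbr_outP; split; first exact: kept_sub.
  by apply/negP => uW'; move: (kept_other_neq uW uW'); rewrite eqxx.
exists w => //; apply: (rep_edge rep (other_sub wW) (kept_sub uW) _ hw hu); last by rewrite esym.
by rewrite eq_sym kept_other_neq.
Qed.

(* [u] has a neighbour in [Ws'], and so has the part [u'] holding the outside
   neighbour of [y]; the split condition then makes [u] adjacent in [p] to the
   part [w] of [Ws'] containing [y]. *)
Lemma side_adj_marker u x y : u \in Ws -> pe q u z ->
  in_act (Tnew u) x -> in_act (Tnew z) y -> e x y.
Proof.
move=> uW; rewrite side_pe_marker // => /nbr_outP [uP uW' [w0 w0W pw0u]].
move=> /(in_act_ext _ (Tnew_kept uW)) hu [hy [x' [nx' ex'y]]].
have [w wW hwy] := (Tnew_marker y).1 hy.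
have [u' u'P hu'] := rep_cover rep x'.
have u'W : u' \in Ws.
  move: u'P; rewrite -cover inE => /orP [//|u'W']; case: nx'; apply/Tnew_marker; by exists u'.
have wu' : w != u' by rewrite eq_sym kept_other_neq.
have pwu' : pe p w u'.
  by apply: (rep_edge rep (other_sub wW) (kept_sub u'W) wu' hwy hu'); rewrite esym.
have Aw : in_act (Told w) y.
  split => //; exists x'; split => // hw.
  exact: (rep_disj rep (other_sub wW) (kept_sub u'W) wu' hw hu').
have puw : pe p u w.
  rewrite (Ws_split uW u'W _ _ wW); first by rewrite (rep_sym rep).
    by exists w0; rewrite (rep_sym rep).
  by exists w; rewrite (rep_sym rep).
exact: (rep_adj rep (kept_sub uW) (other_sub wW) (kept_other_neq uW wW) puw hu Aw).
Qed.

Lemma side_disj u w x : u \in pv q -> w \in pv q -> u != w -> Tnew u x -> Tnew w x -> False.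
Proof.
have kept_marker u' : u' \in Ws -> Tnew u' x -> Tnew z x -> False.
  move=> uW /(Tnew_kept uW) hu /Tnew_marker [w'' wW hw].
  exact: (rep_disj rep (kept_sub uW) (other_sub wW) (kept_other_neq uW wW) hu hw).
rewrite !side_pv => /orP [uW|/eqP->] /orP [wW|/eqP->] uw hu hw.
- move: hu hw => /(Tnew_kept uW) hu /(Tnew_kept wW) hw.
  exact: (rep_disj rep (kept_sub uW) (kept_sub wW) uw hu hw).
- exact: kept_marker uW hu hw.
- exact: kept_marker wW hw hu.
- by rewrite eqxx in uw.
Qed.

Lemma represents_side : represents q Tnew.
Proof.
split.
- exact: side_pe_sym.
- move=> u; rewrite side_pe (rep_irr rep) !andbF /= orbb.
  by apply/negP => /andP [/eqP -> /nbr_outP [zP _ _]]; move: z_fresh; rewrite zP.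
- exact: side_disj.
- move=> u; rewrite side_pv => /orP [uW|/eqP->].
    by have [x hx] := rep_neq0 rep (kept_sub uW); exists x; apply/(Tnew_kept uW).
  have [w wW] := set0Pn _ Ws'_neq0; have [x hx] := rep_neq0 rep (other_sub wW).
  by exists x; apply/Tnew_marker; exists w.
- move=> x; have [u uP hu] := rep_cover rep x; move: uP; rewrite -cover inE => /orP [uW|uW'].
    by exists u; rewrite ?side_pv ?uW //; apply/(Tnew_kept uW).
  by exists z; rewrite ?side_pv ?eqxx ?orbT //; apply/Tnew_marker; exists u.
- move=> u w x y; rewrite !side_pv => /orP [uW|/eqP->] /orP [wW|/eqP->] uw hu hw exy.
  + move: hu hw => /(Tnew_kept uW) hu /(Tnew_kept wW) hw.
    by rewrite side_pe uW wW (rep_edge rep (kept_sub uW) (kept_sub wW) uw hu hw exy).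
  + exact: side_edge_marker uW hu hw exy.
  + by rewrite side_pe_sym; apply: side_edge_marker wW hw hu _; rewrite esym.
  + by rewrite eqxx in uw.
- move=> u w x y; rewrite !side_pv => /orP [uW|/eqP->] /orP [wW|/eqP->] uw puw hu hw.
  + move: puw hu hw; rewrite side_pe uW wW (negbTE (kept_neq_marker uW)).
    rewrite (negbTE (kept_neq_marker wW)) /= !orbF => puw.
    move=> /(in_act_ext _ (Tnew_kept uW)) hu /(in_act_ext _ (Tnew_kept wW)) hw.
    exact: (rep_adj rep (kept_sub uW) (kept_sub wW) uw puw hu hw).
  + exact: side_adj_marker uW puw hu hw.
  + by rewrite esym; apply: side_adj_marker wW _ hw hu; rewrite side_pe_sym.
  + by rewrite eqxx in uw.
Qed.

End SideRepresentation.

Definition marker_paired (ps : seq (part U)) q := forall m', inr m' \in pv (nthp ps q) ->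
  (exists j, [/\ j < size ps, j <> q & inr m' \in pv (nthp ps j)]) /\
  (forall j1 j2, j1 < size ps -> j2 < size ps -> j1 <> q -> j2 <> q ->
     inr m' \in pv (nthp ps j1) -> inr m' \in pv (nthp ps j2) -> j1 = j2).

Definition sd_inv (ps : seq (part U)) := forall q, q < size ps ->
  represents (nthp ps q) (in_tot ps q) /\ marker_paired ps q.

Section Step.
Variables (ps : seq (part U)) (i0 : nat) (V1 : {set U}) (m : M).
Hypotheses (i0_lt : i0 < size ps) (V1_split : is_split (pv (nthp ps i0)) (pe (nthp ps i0)) V1)
  (m_fresh : forall j, j < size ps -> inr m \notin pv (nthp ps j)) (ps_inv : sd_inv ps).
Let n := size ps.
Let p := nthp ps i0.
Let V2 := pv p :\: V1.
Let z : U := inr m.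
Let p1 := side p V1 V2 z.
Let p2 := side p V2 V1 z.
Let ps' := rcons (set_nth ip ps i0 p1) p2.

Lemma size_ps' : size ps' = n.+1.
Proof. by rewrite /ps' size_rcons size_set_nth (maxn_idPr i0_lt). Qed.

Lemma nth_ps' j : nthp ps' j = if j == i0 then p1 else if j == n then p2 else nthp ps j.
Proof.
rewrite /ps' nth_rcons size_set_nth (maxn_idPr i0_lt) nth_set_nth /=.
case: (ltnP j n) => jn.
  by case: (eqVneq j i0); rewrite // (ltn_eqF jn).
case: (eqVneq j i0) => [E|_]; first by move: jn; rewrite E leqNgt i0_lt.
by case: (eqVneq j n) => // _; rewrite nth_default.
Qed.

Lemma lt_n_neq c : c < n -> c <> n.
Proof. by move=> cn E; move: cn; rewrite E ltnn. Qed.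

Lemma lt_n_size c : c < n -> c < size ps'.
Proof. by rewrite size_ps'; apply: ltnW. Qed.

Lemma i0_neq_n : i0 <> n. Proof. exact: lt_n_neq. Qed.

Lemma nth_ps'_old j : j <> i0 -> j <> n -> nthp ps' j = nthp ps j.
Proof. by move=> /eqP/negbTE h1 /eqP/negbTE h2; rewrite nth_ps' h1 h2. Qed.

Lemma nth_ps'_i0 : nthp ps' i0 = p1. Proof. by rewrite nth_ps' eqxx. Qed.
Lemma nth_ps'_n : nthp ps' n = p2.
Proof. by rewrite nth_ps' eqxx; case: eqP => // E; case: i0_neq_n. Qed.

Lemma V1_sub : V1 \subset pv p. Proof. by case/and4P: V1_split. Qed.
Lemma V1_V2_cover : V1 :|: V2 = pv p.
Proof.
apply/setP => u; rewrite !inE; case: (boolP (u \in V1)) => //= uV.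
by rewrite (subsetP V1_sub u uV).
Qed.
Lemma V1_V2_disjoint : [disjoint V1 & V2].
Proof. by rewrite -setI_eq0; apply/eqP/setP => u; rewrite !inE; case: (u \in V1). Qed.
Lemma z_fresh : z \notin pv p. Proof. exact: m_fresh. Qed.
Lemma V2_neq0 : V2 != set0.
Proof. by case/and4P: V1_split => _ _ h _; rewrite -card_gt0; apply: ltnW. Qed.
Lemma V1_neq0 : V1 != set0.
Proof. by case/and4P: V1_split => _ h _ _; rewrite -card_gt0; apply: ltnW. Qed.
Lemma mem_p1 u : (u \in pv p1) = (u \in V1) || (u == z). Proof. exact: side_pv. Qed.
Lemma mem_p2 u : (u \in pv p2) = (u \in V2) || (u == z). Proof. exact: side_pv. Qed.

Definition old_index (j : nat) := if j == n then i0 else j.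

Lemma old_index_lt j : j < n.+1 -> old_index j < n.
Proof. by rewrite /old_index ltnS leq_eqVlt; case: eqP => //= _. Qed.

Lemma mem_old_index j u : u != z -> u \in pv (nthp ps' j) -> u \in pv (nthp ps (old_index j)).
Proof.
move=> uz; rewrite nth_ps' /old_index; case: (eqVneq j i0) => [->|ji].
  rewrite mem_p1 (negbTE uz) orbF if_same => uV.
  exact: (subsetP V1_sub).
case: (eqVneq j n) => // _; rewrite mem_p2 (negbTE uz) orbF inE => /andP [] //.
Qed.

Lemma marker_loc j : j < n.+1 -> z \in pv (nthp ps' j) -> j = i0 \/ j = n.
Proof.
move=> jn; rewrite nth_ps'; case: (eqVneq j i0) => [->|_]; first by left.
case: (eqVneq j n) => [->|jn']; first by right.
move=> h; have jn2 : j < n by move: jn; rewrite ltnS leq_eqVlt (negbTE jn').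
by move: (m_fresh jn2); rewrite h.
Qed.

Lemma mem_ps'_old j u : j < n -> j <> i0 -> (u \in pv (nthp ps' j)) = (u \in pv (nthp ps j)).
Proof. by move=> jn ji; rewrite nth_ps'_old //; apply: lt_n_neq. Qed.

Lemma halves_adj q : q <> i0 -> q <> n -> part_adj ps' q i0 n.
Proof.
move=> q1 q2; rewrite /part_adj size_ps'; split => //; first exact: ltnW.
  by move=> E; apply: q1.
  by move=> E; apply: q2.
split; first exact: i0_neq_n.
by exists m; rewrite nth_ps'_i0 nth_ps'_n mem_p1 mem_p2 !eqxx !orbT.
Qed.

Lemma mem_lift c u : c < n -> u != z -> u \in pv (nthp ps c) ->
  exists c', u \in pv (nthp ps' c') /\ (c' = c \/ (c = i0 /\ c' = n)).
Proof.
move=> cn uz uc; case: (eqVneq c i0) => [E|ci].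
  subst c; have : u \in V1 :|: V2 by rewrite V1_V2_cover.
  rewrite inE => /orP [u1|u2].
    by exists i0; rewrite nth_ps'_i0 mem_p1 u1; split => //; left.
  by exists n; rewrite nth_ps'_n mem_p2 u2; split => //; right.
exists c; split; last by left.
by rewrite mem_ps'_old //; apply/eqP.
Qed.

Lemma linked_prev q : q < n -> q <> i0 ->
  forall a b, part_adj ps' q a b -> linked ps q (old_index a) (old_index b).
Proof.
move=> qn qi a b [an bn aq bq [ab [m'' [ma mb]]]]; rewrite size_ps' in an bn.
case: (eqVneq (inr m'' : U) z) => [E|mz].
  rewrite E in ma mb.
  case: (marker_loc an ma) => ->; case: (marker_loc bn mb) => ->;
    by rewrite /old_index ?eqxx ?if_same; apply: rt_refl.
case: (eqVneq (old_index a) (old_index b)) => [->|fab]; first exact: rt_refl.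
have fne : forall c, c <> q -> old_index c <> q.
  by move=> c cq; rewrite /old_index; case: eqP => // _ E; apply: qi; rewrite E.
apply: rt_step; split; rewrite ?old_index_lt //; try exact: fne.
split; first exact/eqP.
by exists m''; rewrite !mem_old_index.
Qed.

Lemma linked_next q : q < n -> q <> i0 -> forall a b, part_adj ps q a b -> linked ps' q a b.
Proof.
move=> qn qi a b [an bn aq bq [ab [m'' [ma mb]]]].
have qn' := lt_n_neq qn.
have mz : (inr m'' : U) != z by apply: contraTneq ma => ->; exact: m_fresh.
have [a' [ma' ha]] := mem_lift an mz ma.
have [b' [mb' hb]] := mem_lift bn mz mb.
have ra : linked ps' q a a'.
  case: (ha) => [->|[-> ->]]; [exact: rt_refl | exact: rt_step (halves_adj qi qn')].
have rb : linked ps' q b' b.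
  case: (hb) => [->|[-> ->]]; [exact: rt_refl | exact: rt_step (part_adj_sym (halves_adj qi qn'))].
apply: rt_trans ra (rt_trans (rt_step _) rb).
have ltn' : forall c c', c < n -> (c' = c \/ c = i0 /\ c' = n) -> c' < size ps'.
  by move=> c c' cn [->|[_ ->]]; rewrite size_ps' // ltnW.
have neq' : forall c c', c <> q -> (c' = c \/ c = i0 /\ c' = n) -> c' <> q.
  by move=> c c' cq [->|[_ ->]] // E; apply: qn'.
split; try exact: ltn' ha; try exact: ltn' hb; try exact: neq' ha; try exact: neq' hb.
split; last by exists m''.
exact: lifted_index_neq an bn ab ha hb.
Qed.

Lemma in_tot_other q u x : q < n -> q <> i0 -> u \in pv (nthp ps q) -> in_tot ps' q u x <-> in_tot ps q u x.
Proof.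
move=> qn qi uq; case: u uq => [y|m'] uq //=.
have qn' := lt_n_neq qn.
have mz : (inr m' : U) != z by apply: contraTneq uq => ->; exact: m_fresh.
have xz : (inl x : U) != z by [].
split.
  case=> j' [k' [jn ji mj rjk xk]].
  exists (old_index j'), (old_index k'); split.
  - by apply: old_index_lt; rewrite -size_ps'.
  - by rewrite /old_index; case: eqP => // _ E; apply: qi; rewrite E.
  - exact: mem_old_index.
  - exact: rt_map (linked_prev qn qi) rjk.
  - exact: mem_old_index.
case=> j [k [jn ji mj rjk xk]].
have kn : k < n by apply: linked_lt rjk jn.
have [j' [mj' hj]] := mem_lift jn mz mj.
have [k' [xk' hk]] := mem_lift kn xz xk.
exists j', k'; split => //.
- by case: hj => [->|[_ ->]]; rewrite size_ps' // ltnW.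
- by case: hj => [->|[_ ->]] // E; apply: qn'.
- apply: rt_trans (rt_trans _ (rt_map (f:=id) (linked_next qn qi) rjk)) _.
    by case: hj => [->|[-> ->]]; [exact: rt_refl | exact: rt_step (part_adj_sym (halves_adj qi qn'))].
  by case: hk => [->|[-> ->]]; [exact: rt_refl | exact: rt_step (halves_adj qi qn')].
Qed.

(* Index [s] holds the new part built on [Ws], and [s'] its partner built on
   [Ws'], both containing the new marker [z]. *)
Definition halves s s' Ws Ws' :=
  (s = i0 /\ s' = n /\ Ws = V1 /\ Ws' = V2) \/ (s = n /\ s' = i0 /\ Ws = V2 /\ Ws' = V1).

Lemma halves_sym s s' Ws Ws' : halves s s' Ws Ws' -> halves s' s Ws' Ws.
Proof. by case=> [[-> [-> [-> ->]]]|[-> [-> [-> ->]]]]; [right|left]. Qed.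

Lemma halves_nth s s' Ws Ws' : halves s s' Ws Ws' -> nthp ps' s = side p Ws Ws' z.
Proof. by case=> [[-> [_ [-> ->]]]|[-> [_ [-> ->]]]]; rewrite ?nth_ps'_i0 ?nth_ps'_n. Qed.

Lemma halves_ne s s' Ws Ws' : halves s s' Ws Ws' -> s <> s'.
Proof. by case=> [[-> [-> _]]|[-> [-> _]]] => // E; apply: i0_neq_n. Qed.

Lemma halves_lt s s' Ws Ws' : halves s s' Ws Ws' -> s < n.+1.
Proof. by case=> [[-> _]|[-> _]] //; apply: ltnW. Qed.

Lemma halves_other s s' Ws Ws' j : halves s s' Ws Ws' -> j <> s -> j <> s' -> j <> i0 /\ j <> n.
Proof. by case=> [[-> [-> _]]|[-> [-> _]]]. Qed.

Lemma halves_sub s s' Ws Ws' : halves s s' Ws Ws' -> Ws \subset pv p.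
Proof.
case=> [[_ [_ [-> _]]]|[_ [_ [-> _]]]]; first exact: V1_sub.
by apply/subsetP => u; rewrite inE => /andP [].
Qed.

Lemma halves_dis s s' Ws Ws' : halves s s' Ws Ws' -> [disjoint Ws & Ws'].
Proof. by case=> [[_ [_ [-> ->]]]|[_ [_ [-> ->]]]]; rewrite ?V1_V2_disjoint // disjoint_sym V1_V2_disjoint. Qed.

Lemma halves_cov s s' Ws Ws' : halves s s' Ws Ws' -> Ws :|: Ws' = pv p.
Proof. by case=> [[_ [_ [-> ->]]]|[_ [_ [-> ->]]]]; rewrite ?V1_V2_cover // setUC V1_V2_cover. Qed.

Lemma halves_s s s' Ws Ws' : halves s s' Ws Ws' -> s = i0 \/ s = n.
Proof. by case=> [[-> _]|[-> _]]; [left|right]. Qed.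

Lemma inv_i0 : represents p (in_tot ps i0) /\ marker_paired ps i0. Proof. exact: ps_inv. Qed.

Lemma ltn_neq_n j : j < n.+1 -> j <> n -> j < n.
Proof. by rewrite ltnS leq_eqVlt => /orP [/eqP ->|]. Qed.

Lemma halves_neq s s' Ws Ws' c : halves s s' Ws Ws' -> c < n -> c <> i0 -> c <> s.
Proof. by move=> C cn ci; case: (halves_s C) => ->; [|apply: lt_n_neq]. Qed.

Lemma linked_halves_old s s' Ws Ws' j k : halves s s' Ws Ws' ->
  linked ps i0 j k -> linked ps' s j k.
Proof.
move=> C; apply: (rt_map (f:=id)) => a b [an bn ai bi [ab [mw [ma mb]]]].
apply: rt_step; split; rewrite ?lt_n_size //; try exact: halves_neq C _ _.
by split => //; exists mw; rewrite !mem_ps'_old.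
Qed.

Lemma in_tot_half_new s s' Ws Ws' u x : halves s s' Ws Ws' -> u \in Ws ->
  in_tot ps i0 u x -> in_tot ps' s u x.
Proof.
move=> C uW; case: u uW => [y|m'] uW //= [j [k [jn ji mj rjk xk]]].
have kn := linked_lt rjk jn; have ki := linked_neq rjk ji.
exists j, k; split; rewrite ?lt_n_size ?mem_ps'_old //; first exact: halves_neq C _ _.
exact: linked_halves_old C rjk.
Qed.

Lemma in_tot_half_old s s' Ws Ws' u x : halves s s' Ws Ws' -> u \in Ws ->
  in_tot ps' s u x -> in_tot ps i0 u x.
Proof.
move=> C uW; have [[_ _ h3 h4 _ _ _] hS1] := inv_i0.
have Cs := halves_sym C.
case: u uW => [y|m'] uW //=.
have mP : (inr m' : U) \in pv p := subsetP (halves_sub C) _ uW.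
have mz : (inr m' : U) != z by apply: contraTneq mP => ->; exact: z_fresh.
have mW' : (inr m' : U) \notin Ws' by rewrite (disjointFr (halves_dis C) uW).
case=> j' [k' [jn js mj rjk xk]]; rewrite size_ps' in jn.
have js' : j' <> s'.
  move=> E; move: mj; rewrite E (halves_nth Cs) side_pv (negbTE mz) orbF; exact/negP.
have [ji jn'] := halves_other C js js'.
have jn2 := ltn_neq_n jn jn'.
rewrite mem_ps'_old // in mj.
suff [kn [ki rk]] : k' < n /\ k' <> i0 /\ linked ps i0 j' k'.
  by exists j', k'; split => //; rewrite -(mem_ps'_old _ kn ki).
move: rjk; apply: (rt_inv (P := fun k => k < n /\ k <> i0 /\ linked ps i0 j' k)).
  by split => //; split => //; exact: rt_refl.
move=> a b [an [ai ra]] [_ bn _ bs [ab [mw [ma mb]]]]; rewrite size_ps' in bn.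
rewrite mem_ps'_old // in ma.
have bs' : b <> s'.
  move=> E; move: mb; rewrite E (halves_nth Cs) side_pv => /orP [mwW'|/eqP mwz].
    have mwP : (inr mw : U) \in pv p by rewrite -(halves_cov C) inE mwW' orbT.
    have [y [j2 [k2 [j2n j2i mj2 r2 yk]]]] := h4 _ mwP.
    have j2a : j2 = a by apply: (proj2 (hS1 _ mwP)).
    subst j2; apply: (h3 (inr m') (inr mw) y mP mwP).
    - by apply: contraNneq mW' => ->.
    - by exists j', k2; split => //; exact: rt_trans ra r2.
    - by exists a, k2.
  by case: mwz => mwe; subst mw; rewrite (negbTE (m_fresh an)) in ma.
have [bi bn'] := halves_other C bs bs'.
have bn2 := ltn_neq_n bn bn'.
rewrite mem_ps'_old // in mb.
by split => //; split => //; apply: rt_trans ra (rt_step _); split => //; split => //; exists mw.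
Qed.

Lemma in_tot_marker_old s s' Ws Ws' x : halves s s' Ws Ws' ->
  in_tot ps' s z x -> exists2 w, w \in Ws' & in_tot ps i0 w x.
Proof.
move=> C; have Cs := halves_sym C; have sn := halves_ne C.
have ns' : nthp ps' s' = side p Ws' Ws z := halves_nth Cs.
case=> j [k [jn js mj rjk xk]]; rewrite size_ps' in jn.
have js' := marker_index_eq (marker_loc jn mj) (halves_s C) (halves_s Cs) sn js; subst j.
pose from_Ws' k := k = s' \/ [/\ k < n, k <> i0 &
  exists2 w, w \in Ws' /\ (exists mw, w = inr mw) &
    exists j2, [/\ j2 < n, j2 <> i0, w \in pv (nthp ps j2) & linked ps i0 j2 k]].
suff [E|[kn ki [w [wW [mw Ew]] [j2 [j2n j2i wj2 r2]]]]] : from_Ws' k.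
- by move: xk; rewrite E ns' side_pv => /orP [xW|//]; exists (inl x).
- by subst w; exists (inr mw) => //=; exists j2, k; split => //; rewrite -(mem_ps'_old _ kn ki).
move: rjk; apply: (rt_inv (P := from_Ws')); first by left.
move=> a b Ha [an bn _ bs [ab [mw [ma mb]]]]; rewrite size_ps' in an bn.
have [->|bs'] := eqVneq b s'; first by left.
have [bi bn'] := halves_other C bs (elimN eqP bs').
have bn2 := ltn_neq_n bn bn'.
rewrite mem_ps'_old // in mb.
have mwz : (inr mw : U) != z by apply: contraTneq mb => ->; apply: m_fresh.
right; split => //.
case: Ha => [Ea|[an2 ai [w wW' [j2 [j2n j2i wj2 r2]]]]].
  subst a; move: ma; rewrite ns' side_pv (negbTE mwz) orbF => mwW.
  by exists (inr mw); [split => //; exists mw | exists b; split => //; apply: rt_refl].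
exists w => //; exists j2; split => //; apply: rt_trans r2 (rt_step _).
by split => //; split => //; exists mw; rewrite -(mem_ps'_old _ an2 ai).
Qed.

Lemma in_tot_marker_new s s' Ws Ws' x : halves s s' Ws Ws' ->
  (exists2 w, w \in Ws' & in_tot ps i0 w x) -> in_tot ps' s z x.
Proof.
move=> C [w wW]; have Cs := halves_sym C; have sn := halves_ne C.
have ns' : nthp ps' s' = side p Ws' Ws z := halves_nth Cs.
have s'z : z \in pv (nthp ps' s') by rewrite ns' side_pv eqxx orbT.
have s'n : s' < size ps' by rewrite size_ps' (halves_lt Cs).
case: w wW => [y|mw] wW /=.
  by move=> ->; exists s', s'; split => //; [move=> E; apply: sn | exact: rt_refl | rewrite ns' side_pv wW].
case=> j2 [k2 [j2n j2i mj2 r2 xk2]].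
have k2n := linked_lt r2 j2n; have k2i := linked_neq r2 j2i.
exists s', k2; split => //; last by rewrite mem_ps'_old.
  by move=> E; apply: sn.
apply: rt_trans (rt_step (_ : part_adj ps' s s' j2)) (linked_halves_old C r2).
split; [done | exact: lt_n_size | by move=> E; apply: sn | exact: halves_neq C _ _ |].
split; first by move=> E; apply: (halves_neq Cs j2n j2i).
by exists mw; rewrite ns' side_pv wW mem_ps'_old.
Qed.

Lemma halves_split s s' Ws Ws' : halves s s' Ws Ws' -> split_cond (pe p) Ws Ws'.
Proof.
have [[h1 _ _ _ _ _ _] _] := inv_i0.
case=> [[_ [_ [-> ->]]]|[_ [_ [-> ->]]]]; first exact: split_condP V1_split.
by apply: split_condC V1_split; move=> x y; apply: h1.
Qed.

Lemma halves_other_neq0 s s' Ws Ws' : halves s s' Ws Ws' -> Ws' != set0.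
Proof. by case=> [[_ [_ [_ ->]]]|[_ [_ [_ ->]]]]; [exact: V2_neq0|exact: V1_neq0]. Qed.

Lemma represents_half s s' Ws Ws' : halves s s' Ws Ws' -> represents (nthp ps' s) (in_tot ps' s).
Proof.
move=> C; rewrite (halves_nth C).
have [h _] := inv_i0.
apply: (represents_side h z_fresh (halves_cov C) (halves_dis C) (halves_other_neq0 C) (halves_split C)).
  by move=> u uW x; split; [apply: in_tot_half_old C uW | apply: in_tot_half_new C uW].
by move=> x; split; [apply: in_tot_marker_old C | apply: in_tot_marker_new C].
Qed.

Lemma represents_other q : q < n -> q <> i0 -> represents (nthp ps' q) (in_tot ps' q).
Proof.
move=> qn qi; have qn' := lt_n_neq qn.
rewrite nth_ps'_old //; have [h _] := ps_inv qn.
exact: (represents_ext h (fun u uq x => @in_tot_other q u x qn qi uq)).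
Qed.

Lemma marker_paired_half s s' Ws Ws' : halves s s' Ws Ws' -> marker_paired ps' s.
Proof.
move=> C; have Cs := halves_sym C; have sn := halves_ne C.
have [_ hS1] := inv_i0.
move=> m''; rewrite (halves_nth C) side_pv.
case: (eqVneq (inr m'' : U) z) => [E|mz] /=.
  rewrite orbT => _; split.
    exists s'; split; first by rewrite size_ps' (halves_lt Cs).
      by move=> E'; apply: sn.
    by rewrite (halves_nth Cs) side_pv E eqxx orbT.
  move=> j1 j2; rewrite size_ps' => j1n j2n j1s j2s; rewrite E => m1 m2.
  have oth : forall j, j < n.+1 -> j <> s -> z \in pv (nthp ps' j) -> j = s'.
    move=> j jn js mj; exact: marker_index_eq (marker_loc jn mj) (halves_s C) (halves_s Cs) sn js.
  by rewrite (oth _ j1n j1s m1) (oth _ j2n j2s m2).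
rewrite orbF => mW.
have mP : (inr m'' : U) \in pv p := subsetP (halves_sub C) _ mW.
have [[j [jn ji mj]] uniq] := hS1 _ mP.
have mW' : (inr m'' : U) \notin Ws' by rewrite (disjointFr (halves_dis C) mW).
split.
  exists j; split; rewrite ?mem_ps'_old //; first exact: lt_n_size.
  exact: halves_neq C _ _.
have oth : forall j1, j1 < n.+1 -> j1 <> s -> inr m'' \in pv (nthp ps' j1) ->
    j1 < n /\ j1 <> i0 /\ inr m'' \in pv (nthp ps j1).
  move=> j1 j1n j1s m1.
  have j1s' : j1 <> s'.
    move=> E'; move: m1; rewrite E' (halves_nth Cs) side_pv (negbTE mz) orbF; exact/negP.
  have [j1i j1n'] := halves_other C j1s j1s'.
  have j1n2 := ltn_neq_n j1n j1n'.
  by rewrite mem_ps'_old // in m1.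
move=> j1 j2; rewrite size_ps' => j1n j2n j1s j2s m1 m2.
have [a1 [b1 c1]] := oth _ j1n j1s m1.
have [a2 [b2 c2]] := oth _ j2n j2s m2.
exact: uniq.
Qed.

Lemma marker_paired_other q : q < n -> q <> i0 -> marker_paired ps' q.
Proof.
move=> qn qi; have qn' := lt_n_neq qn.
have [_ hS] := ps_inv qn.
move=> m''; rewrite nth_ps'_old // => mq.
have [[j [jn jq mj]] uniq] := hS _ mq.
have mz : (inr m'' : U) != z by apply: contraTneq mq => ->; exact: m_fresh.
split.
  have [j' [mj' hj]] := mem_lift jn mz mj.
  exists j'; split => //.
    by case: hj => [->|[_ ->]]; rewrite size_ps' // ltnW.
  by case: hj => [->|[_ ->]] // E; apply: qn'.
move=> j1 j2; rewrite size_ps' => j1n j2n j1q j2q m1 m2.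
have fne : forall c, c <> q -> old_index c <> q.
  by move=> c cq; rewrite /old_index; case: eqP => // _ E; apply: qi; rewrite E.
have E := uniq _ _ (old_index_lt j1n) (old_index_lt j2n) (fne _ j1q) (fne _ j2q)
  (mem_old_index mz m1) (mem_old_index mz m2).
move: E m1 m2; rewrite /old_index.
case: (eqVneq j1 n) => [->|j1n']; case: (eqVneq j2 n) => [->|j2n'] //.
- move=> E; subst j2; rewrite nth_ps'_i0 nth_ps'_n mem_p1 mem_p2 (negbTE mz) !orbF inE => /andP [h _] h'.
  by rewrite h' in h.
- move=> E; subst j1; rewrite nth_ps'_i0 nth_ps'_n mem_p1 mem_p2 (negbTE mz) !orbF inE => h' /andP [h _].
  by rewrite h' in h.
Qed.

Lemma sd_inv_next : sd_inv ps'.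
Proof.
move=> q; rewrite size_ps' => qn.
case: (eqVneq q i0) => [->|qi].
  have C : halves i0 n V1 V2 by left.
  by split; [exact: represents_half C | exact: marker_paired_half C].
case: (eqVneq q n) => [->|qn'].
  have C : halves n i0 V2 V1 by right.
  by split; [exact: represents_half C | exact: marker_paired_half C].
have qn2 : q < n by apply: ltn_neq_n qn _; apply/eqP.
by split; [apply: represents_other | apply: marker_paired_other] => //; apply/eqP.
Qed.
End Step.

Lemma sd_inv_init : sd_inv [:: ip].
Proof.
move=> q; rewrite /= ltnS leqn0 => /eqP ->; rewrite /=.
have pvE : forall u, u \in pv ip -> exists y, u = inl y.
  by move=> u /imsetP [y _ ->]; exists y.
split.
  split.
  - by case=> [a|a] [b|b] //=; rewrite esym.
  - by case=> [a|a] //=; rewrite eirr.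
  - by move=> u w x /pvE [a ->] /pvE [b ->] ab /= -> E; move: ab; rewrite E eqxx.
  - by move=> u /pvE [a ->]; exists a.
  - by move=> x; exists (inl x) => //; apply/imsetP; exists x.
  - by move=> u w x y /pvE [a ->] /pvE [b ->] _ /= -> ->.
  - by move=> u w x y /pvE [a ->] /pvE [b ->] _ /= pab [-> _] [-> _].
move=> m' /pvE [y] //.
Qed.

Lemma sd_inv_reach ps : sd_reach e ps -> sd_inv ps.
Proof.
elim=> [|ps0 i V1 m0 _ IH iS hs fr]; first exact: sd_inv_init.
apply: (sd_inv_next iS hs _ IH).
by move=> j jn; move/all_nthP: fr; apply.
Qed.

Lemma represents_part ps (i : 'I_(size ps)) : sd_reach e ps -> represents (pt e i) (in_tot ps i).
Proof. by move=> /sd_inv_reach /(_ i (ltn_ord i)) []. Qed.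

Section ActSets.
Variables (ps : seq (part U)) (i : 'I_(size ps)).
Hypotheses (e_conn : forall x y, connect e x y) (rep : represents (pt e i) (in_tot ps i)).
Local Notation P := (pt e i).

Lemma act_disjoint u w : u \in pv P -> w \in pv P -> u != w ->
  [disjoint act e i u & act e i w].
Proof.
move=> uP wP uw; apply/pred0P => x /=; apply/negP => /andP [/actP [hu _] /actP [hw _]].
exact: (rep_disj rep uP wP uw hu hw).
Qed.

Lemma act_edge u w : u \in pv P -> w \in pv P -> u != w ->
  forall x y, x \in act e i u -> y \in act e i w -> e x y = pe P u w.
Proof.
move=> uP wP uw x y /actP hx /actP hy; apply/idP/idP => h.
  exact: (rep_edge rep uP wP uw hx.1 hy.1 h).
exact: (rep_adj rep uP wP uw h hx hy).
Qed.

Lemma act_complete u w : u \in pv P -> w \in pv P -> u != w -> pe P u w ->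
  complete e (act e i u) (act e i w).
Proof. by move=> uP wP uw puw x y hx hy; rewrite (act_edge uP wP uw hx hy). Qed.

Lemma act_neq0 u : 1 < #|pv P| -> u \in pv P -> act e i u != set0.
Proof.
move=> P2 uP; have [x /totP xu] := rep_neq0 rep uP.
have [w wP wu] : exists2 w, w \in pv P & w != u.
  case/card_gt1P: P2 => w1 [w2 [w1P w2P w12]].
  by case: (eqVneq w1 u) => [E|]; [exists w2; rewrite // -E eq_sym | exists w1].
have [y yw] := rep_neq0 rep wP.
have yu : y \notin tot e i u.
  by apply/negP => /totP yu; apply: (rep_disj rep wP uP wu yw yu).
have [x1 [y1 [x1u y1u e11]]] := connect_cross (P := mem (tot e i u)) (e_conn x y) xu yu.
apply/set0Pn; exists x1; apply/actP; split; first exact/totP.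
by exists y1; split; [move/totP; apply/negP | rewrite esym].
Qed.

End ActSets.
End Decomp.

Lemma card_gt3_other (T : finType) (A : {set T}) a b c : 3 < #|A| ->
  exists2 d, d \in A & [&& a != d, b != d & c != d].
Proof.
move=> A_big; have : ~~ (A \subset [set a; b; c]).
  apply: contraTN A_big => /subset_leq_card; rewrite -leqNgt => /leq_trans; apply.
  by rewrite !cardsU !cards1; lia.
case/subsetPn => d dA dabc; exists d => //.
by apply/and3P; split; apply: contraNneq dabc => <-; rewrite !inE eqxx ?orbT.
Qed.

Theorem mainTheorem7 (V M : finType) (e : rel V) (k : nat)
  (ps : seq (part (V + M)%type)) (i : 'I_(size ps)) :
  symmetric e -> irreflexive e -> (forall x y, connect e x y) ->
  0 < k -> smw_lt e k ->
  is_split_decomp e ps ->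
  3 < #|pv (pt e i)| ->
  forall a b c, heavy e k i a b -> heavy e k i a c -> b = c.
Proof.
move=> e_sym e_irr e_conn k_gt0 [N [t [lf [[t_sym t_irr t_conn [t_bridge t_deg lf_inj t_leaf]] sm_lt]]]].
move=> [sd P_prime] P_big a b c /and5P [aP bP pab Wa_big Wb_big] /and5P [_ cP pac _ Wc_big].
have rep := represents_part e_sym e_irr i sd.
have W_edge := act_edge rep.
have W_neq0 u : u \in pv (pt e i) -> act e i u != set0.
  by move=> uP; apply: (act_neq0 e_sym e_conn rep _ uP); apply: ltnW; apply: ltnW.
have ab : a != b by apply: contraTneq pab => ->; rewrite (rep_irr rep).
have ac : a != c by apply: contraTneq pac => ->; rewrite (rep_irr rep).
apply/eqP; apply: contraT => bc.
have [d dP /and3P [ad bd cd]] := card_gt3_other a b c P_big.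
have [p [q [tpq wide]]] := exists_wide_cut t_sym t_irr t_conn t_bridge t_deg lf_inj t_leaf
  e_sym k_gt0 (act_disjoint rep) W_neq0 aP bP cP dP ab ac ad bc bd cd
  (act_complete rep aP bP ab pab) (act_complete rep aP cP ac pac) Wa_big Wb_big Wc_big.
have := wide_cut_sm W_neq0 W_edge (P_prime i (ltn_ord i)) P_big wide.
by rewrite leqNgt sm_lt.
Qed.
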